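(* Let $g:\mathbb{Z}_{\ge 0}\to\mathbb{R}$ be a linearly progressing opponent process (LPOP) with switching time $\tau_0\ge1$ (so $g(0)>0$). Let $T\ge1$, $y_{\min}\in\mathbb{R}$, and let $(y^{\mathrm{nat,lb}}_t)_{t=1}^{T}$ be a given real sequence. Define doses recursively for $t=0,\dots,T-1$ by $$u_t=\max\left\{0,\ \frac{y_{\min}-y^{\mathrm{nat,lb}}_{t+1}-\sum_{k=1}^{t} g(k)\,u_{t-k}}{g(0)}\right\}.$$ Call a natural progression $(y^{\mathrm{nat}}_t)_{t\ge0}$ admissible if $y^{\mathrm{nat}}_t\ge y^{\mathrm{nat,lb}}_t$ for all $t=1,\dots,T$. Then: (a) for every admissible natural progression, the well-being sequence defined by $y_0=y^{\mathrm{nat}}_0$ and $y_{t+1}=\sum_{k=0}^{t}g(k)u_{t-k}+y^{\mathrm{nat}}_{t+1}$ satisfies $y_t\ge y_{\min}$ for all $t=1,\dots,T$; and (b) $(u_t)$ has minimal cumulative dose $\sum_{t=0}^{T-1}u_t$ among all nonnegative dosing sequences $(u'_0,\dots,u'_{T-1})$ that guarantee $y'_t\ge y_{\min}$ for all $t=1,\dots,T$ under every admissible natural progression.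
   Context: An impulse response $g:\mathbb{Z}_{\ge0}\to\mathbb{R}$ is an opponent process if there is a time $\tau_0$ with $g(\tau)>0$ for $\tau<\tau_0$ and $g(\tau)\le 0$ for $\tau\ge\tau_0$. It is a linearly progressing opponent process (LPOP) if in addition there is $\alpha\in[0,1)$ with $g(t+1)\le\alpha\,g(t)$ for all $t<\tau_0-1$ and $|g(t+1)|\ge\alpha\,|g(t)|$ for all $t\ge\tau_0$. Doses are nonnegative reals; the well-being of a dosing sequence $u'$ under natural progression $y^{\mathrm{nat}}$ is $y'_0=y^{\mathrm{nat}}_0$, $y'_{t+1}=\sum_{k=0}^{t}g(k)u'_{t-k}+y^{\mathrm{nat}}_{t+1}$. *)

From Stdlib Require Export Reals.
Open Scope R_scope.

Fixpoint sumR (f : nat -> R) (n : nat) : R :=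
  match n with
  | O => 0
  | S m => sumR f m + f m
  end.

Definition opponent_process (g : nat -> R) (tau0 : nat) : Prop :=
  (forall t, (t < tau0)%nat -> 0 < g t) /\
  (forall t, (tau0 <= t)%nat -> g t <= 0).

Definition LPOP (g : nat -> R) (tau0 : nat) : Prop :=
  opponent_process g tau0 /\
  exists alpha : R, 0 <= alpha < 1 /\
    (forall t, (t + 1 < tau0)%nat -> g (S t) <= alpha * g t) /\
    (forall t, (tau0 <= t)%nat -> Rabs (g (S t)) >= alpha * Rabs (g t)).

Definition wellbeing (g u ynat : nat -> R) (t : nat) : R :=
  match t with
  | O => ynat O
  | S s => sumR (fun k => g k * u (s - k)%nat) (S s) + ynat (S s)
  end.

Definition admissible (T : nat) (ylb ynat : nat -> R) : Prop :=
  forall t, (1 <= t <= T)%nat -> ynat t >= ylb t.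

Definition guarantees (g : nat -> R) (T : nat) (ymin : R) (ylb u : nat -> R) : Prop :=
  forall ynat, admissible T ylb ynat ->
    forall t, (1 <= t <= T)%nat -> wellbeing g u ynat t >= ymin.

(* The least admissible natural progression is ylb itself, so a dose u' is
   guaranteed iff C u' >= ymin - ylb, where C is the lower-triangular
   convolution matrix of g; the greedy dose meets this with equality wherever
   it is positive, which gives (a). Part (b) is linear-programming duality for
   min sum u' subject to u' >= 0 and C u' >= ymin - ylb. A dual certificate
   y >= 0 with C^T y <= 1 is built backwards in time: y_s =
   (1 - sum_{t>s} g(t-s) y_t) / g(0) where the greedy dose is positive, and
   y_s = 0 otherwise. The bound g(k+1) <= alpha g(k), which holds on both sides
   of the switching time, caps the tail sum by alpha <= 1, so y_s >= 0.
   Complementary slackness makes the greedy total equal to the dual value, and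
   weak duality bounds every feasible total from below by it. *)
From Stdlib Require Import Reals Lra Lia Arith Classical_Prop.
Open Scope R_scope.

Lemma sumR_ext (f h : nat -> R) n :
  (forall k, (k < n)%nat -> f k = h k) -> sumR f n = sumR h n.
Proof.
  induction n as [|n IH]; intros Hfh; simpl; [reflexivity|].
  rewrite IH by (intros; apply Hfh; lia).
  rewrite Hfh by lia. reflexivity.
Qed.

Lemma sumR_le (f h : nat -> R) n :
  (forall k, (k < n)%nat -> f k <= h k) -> sumR f n <= sumR h n.
Proof.
  induction n as [|n IH]; intros Hfh; simpl; [lra|].
  assert (sumR f n <= sumR h n) by (apply IH; intros; apply Hfh; lia).
  assert (f n <= h n) by (apply Hfh; lia).
  lra.
Qed.

Lemma sumR_add (f h : nat -> R) n :
  sumR (fun k => f k + h k) n = sumR f n + sumR h n.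
Proof. induction n as [|n IH]; simpl; [|rewrite IH]; lra. Qed.

Lemma sumR_scal_l (c : R) (f : nat -> R) n :
  sumR (fun k => c * f k) n = c * sumR f n.
Proof. induction n as [|n IH]; simpl; [|rewrite IH]; lra. Qed.

Lemma sumR_0 n : sumR (fun _ => 0) n = 0.
Proof. induction n as [|n IH]; simpl; [|rewrite IH]; lra. Qed.

Lemma sumR_succ_l (f : nat -> R) n :
  sumR f (S n) = f O + sumR (fun j => f (S j)) n.
Proof. induction n as [|n IH]; simpl in *; [|rewrite IH]; lra. Qed.

Lemma sumR_rev (f : nat -> R) n :
  sumR f n = sumR (fun k => f (n - S k)%nat) n.
Proof.
  induction n as [|n IH]; [reflexivity|].
  change (sumR f n + f n = sumR (fun k => f (S n - S k)%nat) (S n)).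
  rewrite sumR_succ_l, IH. simpl. rewrite Nat.sub_0_r. lra.
Qed.

Lemma sumR_swap (f : nat -> nat -> R) n m :
  sumR (fun i => sumR (f i) m) n = sumR (fun j => sumR (fun i => f i j) n) m.
Proof.
  induction n as [|n IH]; simpl.
  - symmetry. apply sumR_0.
  - rewrite IH, <- sumR_add. reflexivity.
Qed.

Lemma sumR_indicator (c : R) s n : (s < n)%nat ->
  sumR (fun t => if (t =? s)%nat then c else 0) n = c.
Proof.
  induction n as [|n IH]; intros Hs; simpl; [lia|].
  destruct (Nat.eqb_spec n s) as [->|Hns].
  - rewrite (sumR_ext _ (fun _ => 0)), sumR_0; [lra|].
    intros k Hk. destruct (Nat.eqb_spec k s); [lia|reflexivity].
  - rewrite IH by lia. lra.
Qed.

Lemma sumR_truncate (f : nat -> R) t n : (t < n)%nat ->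
  sumR (fun s => if (s <=? t)%nat then f s else 0) n = sumR f (S t).
Proof.
  induction n as [|n IH]; intros Htn; [lia|].
  simpl sumR at 1. destruct (Nat.eq_dec t n) as [->|Htn'].
  - rewrite Nat.leb_refl.
    rewrite (sumR_ext _ f); [reflexivity|].
    intros k Hk. destruct (Nat.leb_spec k n); [reflexivity|lia].
  - rewrite IH by lia. destruct (Nat.leb_spec n t); [lia|lra].
Qed.

Definition conv (g x : nat -> R) (t : nat) : R :=
  sumR (fun k => g k * x (t - k)%nat) (S t).

Definition conv_adjoint (g : nat -> R) (T : nat) (y : nat -> R) (s : nat) : R :=
  sumR (fun t => if (s <=? t)%nat then g (t - s)%nat * y t else 0) T.

Lemma conv_split_first (g x : nat -> R) t :
  conv g x t = g O * x t + sumR (fun j => g (S j) * x (t - S j)%nat) t.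
Proof. unfold conv. rewrite sumR_succ_l, Nat.sub_0_r. reflexivity. Qed.

Lemma conv_as_sumR (g x : nat -> R) T t : (t < T)%nat ->
  conv g x t = sumR (fun s => if (s <=? t)%nat then g (t - s)%nat * x s else 0) T.
Proof.
  intros Ht. rewrite sumR_truncate by exact Ht.
  unfold conv. rewrite sumR_rev. apply sumR_ext. intros k Hk.
  replace (t - (S t - S k))%nat with k by lia.
  replace (S t - S k)%nat with (t - k)%nat by lia.
  reflexivity.
Qed.

Lemma sumR_mul_conv_adjoint (g x y : nat -> R) T :
  sumR (fun s => x s * conv_adjoint g T y s) T = sumR (fun t => y t * conv g x t) T.
Proof.
  unfold conv_adjoint.
  rewrite (sumR_ext _ (fun s => sumR (fun t =>
     x s * (if (s <=? t)%nat then g (t - s)%nat * y t else 0)) T))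
    by (intros; rewrite sumR_scal_l; reflexivity).
  rewrite sumR_swap. apply sumR_ext. intros t Ht.
  rewrite (conv_as_sumR g x T t Ht), <- sumR_scal_l.
  apply sumR_ext. intros s _. destruct (s <=? t)%nat; ring.
Qed.

Lemma conv_adjoint_ext (g y y' : nat -> R) T s :
  (forall t, (s <= t)%nat -> y t = y' t) ->
  conv_adjoint g T y s = conv_adjoint g T y' s.
Proof.
  intros Hyy'. unfold conv_adjoint. apply sumR_ext. intros t _.
  destruct (Nat.leb_spec s t); [rewrite Hyy'|]; auto.
Qed.

Definition update (y : nat -> R) (n : nat) (v : R) (t : nat) : R :=
  if (t =? n)%nat then v else y t.

Lemma update_at (y : nat -> R) n v : update y n v n = v.
Proof. unfold update. rewrite Nat.eqb_refl. reflexivity. Qed.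

Lemma update_ne (y : nat -> R) n v t : t <> n -> update y n v t = y t.
Proof. intros Htn. unfold update. destruct (Nat.eqb_spec t n); [lia|reflexivity]. Qed.

Lemma conv_adjoint_update_gt (g y : nat -> R) T n v s : (n < s)%nat ->
  conv_adjoint g T (update y n v) s = conv_adjoint g T y s.
Proof. intros Hs. apply conv_adjoint_ext. intros t Ht. apply update_ne. lia. Qed.

Lemma conv_adjoint_update_at (g y : nat -> R) T n v : (n < T)%nat ->
  conv_adjoint g T (update y n v) n
  = g O * v + conv_adjoint (fun k => g (S k)) T y (S n).
Proof.
  intros Hn. rewrite <- (conv_adjoint_update_gt _ y T n v (S n)) by lia.
  unfold conv_adjoint.
  rewrite <- (sumR_indicator (g O * v) n T Hn), <- sumR_add.
  apply sumR_ext. intros t _.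
  destruct (Nat.eqb_spec t n) as [->|Htn].
  - rewrite Nat.leb_refl, Nat.sub_diag, update_at.
    destruct (Nat.leb_spec (S n) n); [lia|ring].
  - destruct (Nat.leb_spec n t), (Nat.leb_spec (S n) t); try lia; [|ring].
    replace (t - n)%nat with (S (t - S n)) by lia. ring.
Qed.

Lemma conv_adjoint_le_scale (g h y : nat -> R) T alpha s :
  (forall k, h k <= alpha * g k) -> (forall t, 0 <= y t) ->
  conv_adjoint h T y s <= alpha * conv_adjoint g T y s.
Proof.
  intros Hhg Hy. unfold conv_adjoint. rewrite <- sumR_scal_l.
  apply sumR_le. intros t _. destruct (s <=? t)%nat; [|lra].
  rewrite <- Rmult_assoc. apply Rmult_le_compat_r; auto.
Qed.

Lemma weak_duality (g b x y : nat -> R) T :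
  (forall s, (s < T)%nat -> 0 <= x s) ->
  (forall t, (t < T)%nat -> 0 <= y t) ->
  (forall t, (t < T)%nat -> b t <= conv g x t) ->
  (forall s, (s < T)%nat -> conv_adjoint g T y s <= 1) ->
  sumR (fun t => y t * b t) T <= sumR x T.
Proof.
  intros Hx Hy Hprimal Hdual.
  apply Rle_trans with (sumR (fun t => y t * conv g x t) T).
  - apply sumR_le. intros t Ht. apply Rmult_le_compat_l; auto.
  - rewrite <- sumR_mul_conv_adjoint. apply sumR_le. intros s Hs.
    specialize (Hx s Hs). specialize (Hdual s Hs). nra.
Qed.

Lemma complementary_slackness (g b x y : nat -> R) T :
  (forall t, (t < T)%nat -> y t = 0 \/ conv g x t = b t) ->
  (forall s, (s < T)%nat -> x s = 0 \/ conv_adjoint g T y s = 1) ->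
  sumR (fun t => y t * b t) T = sumR x T.
Proof.
  intros Hprimal Hdual.
  transitivity (sumR (fun t => y t * conv g x t) T).
  - apply sumR_ext. intros t Ht. destruct (Hprimal t Ht) as [-> | ->]; ring.
  - rewrite <- sumR_mul_conv_adjoint. apply sumR_ext. intros s Hs.
    destruct (Hdual s Hs) as [-> | ->]; ring.
Qed.

Section DualCertificate.

Variables (g : nat -> R) (T : nat) (alpha : R) (active : nat -> Prop).
Hypothesis alpha_range : 0 <= alpha <= 1.
Hypothesis g0_pos : 0 < g O.
Hypothesis g_ratio : forall k, g (S k) <= alpha * g k.

Lemma dual_certificate_from n : (n <= T)%nat -> exists y : nat -> R,
  (forall t, 0 <= y t) /\
  (forall s, (n <= s)%nat -> conv_adjoint g T y s <= 1) /\
  (forall s, (n <= s < T)%nat ->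
     (active s -> conv_adjoint g T y s = 1) /\ (~ active s -> y s = 0)).
Proof.
  remember (T - n)%nat as m eqn:Hm. revert n Hm.
  induction m as [|m IH]; intros n Hm Hn.
  - exists (fun _ => 0). split; [intros; lra|split; intros s Hs; [|lia]].
    unfold conv_adjoint. rewrite (sumR_ext _ (fun _ => 0)), sumR_0; [lra|].
    intros t _. destruct (s <=? t)%nat; ring.
  - destruct (IH (S n) ltac:(lia) ltac:(lia)) as [y [Hy_nonneg [Hy_le Hy_slack]]].
    set (tail := conv_adjoint (fun k => g (S k)) T y (S n)).
    assert (Htail : tail <= 1).
    { assert (Hle : tail <= alpha * conv_adjoint g T y (S n))
        by (apply conv_adjoint_le_scale; auto).
      specialize (Hy_le (S n) (le_n _)). nra. }
    assert (Hv : exists v, 0 <= v /\ g O * v + tail <= 1 /\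
               (active n -> g O * v + tail = 1) /\ (~ active n -> v = 0)).
    { destruct (classic (active n)) as [Hact|Hinact].
      - exists ((1 - tail) / g O).
        assert (Hsolve : g O * ((1 - tail) / g O) + tail = 1) by (field; lra).
        split; [|split; [lra|tauto]].
        unfold Rdiv. apply Rmult_le_pos; [lra|left; apply Rinv_0_lt_compat; lra].
      - exists 0. split; [lra|split; [lra|tauto]]. }
    destruct Hv as [v [Hv_nonneg [Hv_le [Hv_act Hv_inact]]]].
    exists (update y n v). split; [|split].
    + intros t. unfold update. destruct (t =? n)%nat; auto.
    + intros s Hs. destruct (Nat.eq_dec s n) as [->|Hsn].
      * rewrite conv_adjoint_update_at by lia. exact Hv_le.
      * rewrite conv_adjoint_update_gt by lia. apply Hy_le. lia.
    + intros s Hs. destruct (Nat.eq_dec s n) as [->|Hsn].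
      * rewrite conv_adjoint_update_at, update_at by lia. tauto.
      * rewrite conv_adjoint_update_gt, update_ne by lia. apply Hy_slack. lia.
Qed.

End DualCertificate.

Lemma LPOP_ratio_bound (g : nat -> R) tau0 : LPOP g tau0 ->
  exists alpha, 0 <= alpha < 1 /\ forall k, g (S k) <= alpha * g k.
Proof.
  intros [[Hpos Hnonpos] [alpha [Halpha [Hdecay Hgrowth]]]].
  exists alpha. split; [exact Halpha|]. intros k.
  destruct (lt_dec (k + 1) tau0) as [Hk|Hk]; [auto|].
  assert (HSk : g (S k) <= 0) by (apply Hnonpos; lia).
  destruct (Nat.eq_dec (k + 1) tau0) as [Hswitch|Hswitch].
  - assert (0 < g k) by (apply Hpos; lia). nra.
  - assert (Hgk : g k <= 0) by (apply Hnonpos; lia).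
    specialize (Hgrowth k ltac:(lia)).
    rewrite (Rabs_left1 _ HSk), (Rabs_left1 _ Hgk) in Hgrowth. lra.
Qed.

Lemma wellbeing_succ (g x ynat : nat -> R) t :
  wellbeing g x ynat (S t) = conv g x t + ynat (S t).
Proof. reflexivity. Qed.

Lemma guarantees_iff_conv (g : nat -> R) T ymin (ylb x : nat -> R) :
  guarantees g T ymin ylb x <->
  (forall t, (t < T)%nat -> ymin - ylb (S t) <= conv g x t).
Proof.
  split.
  - intros Hx t Ht.
    assert (Hylb : admissible T ylb ylb) by (intros k _; lra).
    specialize (Hx ylb Hylb (S t) ltac:(lia)).
    rewrite wellbeing_succ in Hx. lra.
  - intros Hx ynat Hadm [|t] Ht; [lia|].
    specialize (Hx t ltac:(lia)). specialize (Hadm (S t) Ht).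
    rewrite wellbeing_succ. lra.
Qed.

Lemma greedy_step_spec (a b r x : R) : 0 < a -> x = Rmax 0 ((b - r) / a) ->
  0 <= x /\ b <= a * x + r /\ (0 < x -> a * x + r = b).
Proof.
  intros Ha ->. unfold Rmax. destruct (Rle_dec 0 ((b - r) / a)) as [Hle|Hlt].
  - assert (Hab : a * ((b - r) / a) + r = b) by (field; lra).
    rewrite Hab. repeat split; lra.
  - apply Rnot_le_lt in Hlt.
    assert (b - r < 0).
    { replace (b - r) with (a * ((b - r) / a)) by (field; lra). nra. }
    repeat split; lra.
Qed.

Theorem proposition1 (g : nat -> R) (tau0 : nat) (T : nat) (ymin : R)
  (ylb u : nat -> R) :
  LPOP g tau0 -> (1 <= tau0)%nat -> (1 <= T)%nat ->
  (* u is the recursively defined dose, for t = 0 .. T-1 *)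
  (forall t, (t < T)%nat ->
     u t = Rmax 0 ((ymin - ylb (S t)
                    - sumR (fun j => g (S j) * u (t - S j)%nat) t) / g O)) ->
  (* (a) *)
  guarantees g T ymin ylb u /\
  (* (b) *)
  (forall u' : nat -> R,
     (forall t, (t < T)%nat -> 0 <= u' t) ->
     guarantees g T ymin ylb u' ->
     sumR u T <= sumR u' T).
Proof.
  intros Hlpop Htau0 _ Hu.
  set (b := fun t => ymin - ylb (S t)).
  assert (Hg0 : 0 < g O) by (apply (proj1 (proj1 Hlpop)); lia).
  destruct (LPOP_ratio_bound g tau0 Hlpop) as [alpha [Halpha Hratio]].
  assert (Hgreedy : forall t, (t < T)%nat ->
            0 <= u t /\ b t <= conv g u t /\ (0 < u t -> conv g u t = b t)).
  { intros t Ht. rewrite conv_split_first. exact (greedy_step_spec _ _ _ _ Hg0 (Hu t Ht)). }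
  split.
  - apply guarantees_iff_conv. intros t Ht. apply Hgreedy, Ht.
  - intros u' Hu'_nonneg Hu'.
    rewrite guarantees_iff_conv in Hu'.
    destruct (dual_certificate_from g T alpha (fun s => 0 < u s)
                ltac:(lra) Hg0 Hratio O (Nat.le_0_l T))
      as [y [Hy_nonneg [Hy_le Hy_slack]]].
    rewrite <- (complementary_slackness g b u y T).
    + apply (weak_duality g); auto. intros s Hs. apply Hy_le. lia.
    + intros t Ht. destruct (Hgreedy t Ht) as [_ [_ Htight]].
      destruct (Hy_slack t ltac:(lia)) as [_ Hzero].
      destruct (Rlt_dec 0 (u t)); auto.
    + intros s Hs. destruct (Hgreedy s Hs) as [Hus _].
      destruct (Hy_slack s ltac:(lia)) as [Hone _].
      destruct (Rlt_dec 0 (u s)); auto. left. lra.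
Qed.
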